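(* (1) $S^{N-1}_{\mathbb C,\times}$ is left and right half-classical, and it is maximal with this property: every closed subspace $X\subset S^{N-1}_{\mathbb C,+}$ which is both left and right half-classical satisfies $X\subset S^{N-1}_{\mathbb C,\times}$. (2) $S^{N-1}_{\mathbb C,**}$ is fully half-classical. (3) $S^{N-1}_{\mathbb R,*}$ is fully half-classical, and every closed subspace $X\subset S^{N-1}_{\mathbb R,+}$ which is fully half-classical satisfies $X\subset S^{N-1}_{\mathbb R,*}$.
   Context: $C(S^{N-1}_{\mathbb C,+})$ is the universal unital C*-algebra generated by $x_1,\dots,x_N$ with $\sum_ix_ix_i^*=\sum_ix_i^*x_i=1$; $S^{N-1}_{\mathbb R,+}$ adds $x_i=x_i^*$. $S^{N-1}_{\mathbb C,\times}$: impose $ab^*c=cb^*a$ for all $a,b,c\in\{x_i\}$; $S^{N-1}_{\mathbb C,**}$: impose $abc=cba$ for all $a,b,c\in\{x_i,x_i^*\}$; $S^{N-1}_{\mathbb R,*}$: impose on $S^{N-1}_{\mathbb R,+}$ the relations $abc=cba$ for $a,b,c\in\{x_i\}$. Closed subspaces $X\subset S^{N-1}_{\mathbb C,+}$ are quotients $C(X)$ of $C(S^{N-1}_{\mathbb C,+})$. For such $X$: the left projective version $PX$ has $C(PX)$ = C*-subalgebra of $C(X)$ generated by $p_{ij}=x_ix_j^*$; the right projective version $P'X$ is generated by $q_{ij}=x_j^*x_i$; the full projective version $\mathcal PX$ is generated by all $p_{ij},q_{ij}$. $X$ is left/right/fully half-classical when $C(PX)$, $C(P'X)$, $C(\mathcal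 PX)$ respectively is commutative. *)

From Stdlib Require Import Reals.
Open Scope R_scope.

Definition Cx : Type := (R * R)%type.
Definition Cadd (a b : Cx) : Cx := (fst a + fst b, snd a + snd b).
Definition Cmul (a b : Cx) : Cx :=
  (fst a * fst b - snd a * snd b, fst a * snd b + snd a * fst b).
Definition Cconj (a : Cx) : Cx := (fst a, - snd a).
Definition Cabs (a : Cx) : R := sqrt (fst a * fst a + snd a * snd a).
Definition C1 : Cx := (1, 0).

(* ---------- Unital C*-algebras (possibly the zero algebra) ---------- *)
Record CStarAlg := {
  car :> Type;
  add : car -> car -> car;
  opp : car -> car;
  zero : car;
  mul : car -> car -> car;
  one : car;
  scal : Cx -> car -> car;
  star : car -> car;
  norm : car -> R;
  addA : forall x y z, add x (add y z) = add (add x y) z;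
  addC : forall x y, add x y = add y x;
  add0 : forall x, add zero x = x;
  addN : forall x, add (opp x) x = zero;
  scalA : forall a b x, scal a (scal b x) = scal (Cmul a b) x;
  scal1 : forall x, scal C1 x = x;
  scalDr : forall a x y, scal a (add x y) = add (scal a x) (scal a y);
  scalDl : forall a b x, scal (Cadd a b) x = add (scal a x) (scal b x);
  mulA : forall x y z, mul x (mul y z) = mul (mul x y) z;
  mul1l : forall x, mul one x = x;
  mul1r : forall x, mul x one = x;
  mulDl : forall x y z, mul (add x y) z = add (mul x z) (mul y z);
  mulDr : forall x y z, mul x (add y z) = add (mul x y) (mul x z);
  scal_mull : forall a x y, scal a (mul x y) = mul (scal a x) y;
  scal_mulr : forall a x y, scal a (mul x y) = mul x (scal a y);
  starK : forall x, star (star x) = x;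
  starD : forall x y, star (add x y) = add (star x) (star y);
  starZ : forall a x, star (scal a x) = scal (Cconj a) (star x);
  starM : forall x y, star (mul x y) = mul (star y) (star x);
  norm_ge0 : forall x, 0 <= norm x;
  norm_eq0 : forall x, norm x = 0 -> x = zero;
  norm_triangle : forall x y, norm (add x y) <= norm x + norm y;
  normZ : forall a x, norm (scal a x) = Cabs a * norm x;
  normM : forall x y, norm (mul x y) <= norm x * norm y;
  norm_cstar : forall x, norm (mul (star x) x) = norm x * norm x;
  complete : forall u : nat -> car,
    (forall eps, 0 < eps -> exists M, forall m n, (M <= m)%nat -> (M <= n)%nat ->
        norm (add (u m) (opp (u n))) < eps) ->
    exists l, forall eps, 0 < eps -> exists M, forall n, (M <= n)%nat ->
        norm (add (u n) (opp l)) < eps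
}.

Arguments add {_}. Arguments opp {_}. Arguments zero {_}. Arguments mul {_}.
Arguments one {_}. Arguments scal {_}. Arguments star {_}. Arguments norm {_}.

Fixpoint sumA (A : CStarAlg) (n : nat) (f : nat -> A) : A :=
  match n with
  | O => zero
  | S n' => add (sumA A n' f) (f n')
  end.

Definition converges (A : CStarAlg) (u : nat -> A) (l : A) : Prop :=
  forall eps, 0 < eps -> exists M, forall n, (M <= n)%nat -> norm (add (u n) (opp l)) < eps.

Definition closed_star_subalg (A : CStarAlg) (S : A -> Prop) : Prop :=
  S one /\
  (forall x y, S x -> S y -> S (add x y)) /\
  (forall a x, S x -> S (scal a x)) /\
  (forall x y, S x -> S y -> S (mul x y)) /\
  (forall x, S x -> S (star x)) /\
  (forall u l, (forall n, S (u n)) -> converges A u l -> S l).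

Definition generated (A : CStarAlg) (G : A -> Prop) (a : A) : Prop :=
  forall S, closed_star_subalg A S -> (forall g, G g -> S g) -> S a.

Definition commutative_set (A : CStarAlg) (S : A -> Prop) : Prop :=
  forall a b, S a -> S b -> mul a b = mul b a.

(* ---------- Closed subspaces X of the free complex sphere ----------
   C(X) = a unital C*-algebra A generated by x_0..x_{N-1} satisfying the
   relations of C(S^{N-1}_{C,+}) (i.e. a quotient of C(S^{N-1}_{C,+})). *)
Definition free_complex_sphere (N : nat) (A : CStarAlg) (x : nat -> A) : Prop :=
  sumA A N (fun i => mul (x i) (star (x i))) = one /\
  sumA A N (fun i => mul (star (x i)) (x i)) = one.

Definition generated_by (N : nat) (A : CStarAlg) (x : nat -> A) : Prop :=
  forall a : A, generated A (fun g => exists i, (i < N)%nat /\ g = x i) a.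

Definition closed_subspace (N : nat) (A : CStarAlg) (x : nat -> A) : Prop :=
  free_complex_sphere N A x /\ generated_by N A x.

(* real version: S^{N-1}_{R,+} adds x_i = x_i^* *)
Definition self_adjoint_coords (N : nat) (A : CStarAlg) (x : nat -> A) : Prop :=
  forall i, (i < N)%nat -> star (x i) = x i.

Definition rel_times (N : nat) (A : CStarAlg) (x : nat -> A) : Prop :=
  forall i j k, (i < N)%nat -> (j < N)%nat -> (k < N)%nat ->
    mul (mul (x i) (star (x j))) (x k) = mul (mul (x k) (star (x j))) (x i).

Definition coord_or_adj (N : nat) (A : CStarAlg) (x : nat -> A) (a : A) : Prop :=
  exists i, (i < N)%nat /\ (a = x i \/ a = star (x i)).

Definition rel_starstar (N : nat) (A : CStarAlg) (x : nat -> A) : Prop :=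
  forall a b c, coord_or_adj N A x a -> coord_or_adj N A x b -> coord_or_adj N A x c ->
    mul (mul a b) c = mul (mul c b) a.

(* relations of S_{R,*}: abc = cba, a,b,c in {x_i} *)
Definition rel_half_real (N : nat) (A : CStarAlg) (x : nat -> A) : Prop :=
  forall i j k, (i < N)%nat -> (j < N)%nat -> (k < N)%nat ->
    mul (mul (x i) (x j)) (x k) = mul (mul (x k) (x j)) (x i).

Definition is_p (N : nat) (A : CStarAlg) (x : nat -> A) (a : A) : Prop :=
  exists i j, (i < N)%nat /\ (j < N)%nat /\ a = mul (x i) (star (x j)).
Definition is_q (N : nat) (A : CStarAlg) (x : nat -> A) (a : A) : Prop :=
  exists i j, (i < N)%nat /\ (j < N)%nat /\ a = mul (star (x j)) (x i).

(* C(PX), C(P'X), C(\mathcal P X) commutative *)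
Definition left_half_classical (N : nat) (A : CStarAlg) (x : nat -> A) : Prop :=
  commutative_set A (generated A (is_p N A x)).
Definition right_half_classical (N : nat) (A : CStarAlg) (x : nat -> A) : Prop :=
  commutative_set A (generated A (is_q N A x)).
Definition fully_half_classical (N : nat) (A : CStarAlg) (x : nat -> A) : Prop :=
  commutative_set A (generated A (fun a => is_p N A x a \/ is_q N A x a)).

From Stdlib Require Import Reals Lra Psatz.
Open Scope R_scope.

(* The sets {p_ij} and {q_ij} are closed under the involution, and the commutant
   of a self-adjoint set is a closed *-subalgebra; so C(PX), C(P'X), C(𝒫X) are
   commutative as soon as their generators commute.  For generators, a swap
   abc = cba of three letters applied to (a,b,c) and then to (b,a,d) gives
   (ab)(cd) = (cd)(ab).  Conversely, inserting 1 = sum_l x_l x_l^* on the left of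
   x_i x_j^* x_k and 1 = sum_l x_l^* x_l on the right, and commuting first two q's
   and then two p's, moves x_k to the front and x_i to the back. *)

Section Algebra.

Variable A : CStarAlg.
Implicit Types a b c d g l : A.

Lemma addr0 a : add a zero = a.
Proof. rewrite addC; apply add0. Qed.

Lemma addrN a : add a (opp a) = zero.
Proof. rewrite addC; apply addN. Qed.

Lemma opp_unique a b : add b a = zero -> b = opp a.
Proof. intro H. rewrite <- (addr0 b), <- (addrN a), addA, H, add0. reflexivity. Qed.

Lemma subr_eq0 a b : add a (opp b) = zero -> a = b.
Proof. intro H. rewrite <- (addr0 a), <- (addN A b), addA, H, add0. reflexivity. Qed.

Lemma addrr_eq0 a : add a a = a -> a = zero.
Proof.
  intro H. assert (E : add (opp a) (add a a) = add (opp a) a) by (rewrite H; reflexivity).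
  rewrite addA, addN, add0 in E. exact E.
Qed.

Lemma mul0l a : mul zero a = zero.
Proof. apply addrr_eq0. rewrite <- mulDl, add0. reflexivity. Qed.

Lemma mul0r a : mul a zero = zero.
Proof. apply addrr_eq0. rewrite <- mulDr, add0. reflexivity. Qed.

Lemma mulNl a b : mul (opp a) b = opp (mul a b).
Proof. apply opp_unique. rewrite <- mulDl, addN, mul0l. reflexivity. Qed.

Lemma mulNr a b : mul a (opp b) = opp (mul a b).
Proof. apply opp_unique. rewrite <- mulDr, addN, mul0r. reflexivity. Qed.

Lemma oppE a : opp a = scal (-1, 0) a.
Proof.
  symmetry; apply opp_unique. rewrite <- (scal1 A a) at 2. rewrite <- scalDl.
  apply addrr_eq0. rewrite <- scalDl. unfold Cadd, C1; simpl.
  f_equal; f_equal; ring.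
Qed.

Lemma norm_opp a : norm (opp a) = norm a.
Proof.
  rewrite oppE, normZ. unfold Cabs; simpl.
  replace (-1 * -1 + 0 * 0) with 1 by ring. rewrite sqrt_1. ring.
Qed.

Lemma opp_sub a b : opp (add a (opp b)) = add b (opp a).
Proof.
  symmetry; apply opp_unique.
  rewrite <- addA, (addA A (opp a) a), addN, add0, addrN. reflexivity.
Qed.

Lemma commutator_limit_decomp (u : A) l g :
  mul u g = mul g u ->
  add (mul l g) (opp (mul g l))
  = add (mul (opp (add u (opp l))) g) (mul g (add u (opp l))).
Proof.
  intro Hu. rewrite opp_sub, mulDl, mulDr, mulNl, mulNr, Hu.
  rewrite <- addA, (addA A (opp (mul g u)) (mul g u)), addN, add0. reflexivity.
Qed.

Lemma Rle_eps_eq0 r k : 0 <= r -> 0 <= k -> (forall eps, 0 < eps -> r <= k * eps) -> r = 0.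
Proof.
  intros Hr Hk H. destruct (Rle_lt_or_eq_dec 0 r Hr) as [Hp | <-]; [exfalso | reflexivity].
  specialize (H (r / (2 * (k + 1)))).
  assert (E : k * (r / (2 * (k + 1))) < r).
  { apply Rmult_lt_reg_r with (2 * (k + 1)); [lra|].
    field_simplify; [nra | lra]. }
  assert (0 < r / (2 * (k + 1))) by (apply Rdiv_lt_0_compat; lra).
  lra.
Qed.

Lemma limit_mul_comm (u : nat -> A) l g :
  (forall n, mul (u n) g = mul g (u n)) -> converges A u l -> mul l g = mul g l.
Proof.
  intros Hu Hc. apply subr_eq0, norm_eq0.
  apply Rle_eps_eq0 with (2 * norm g); [apply norm_ge0 | pose proof (norm_ge0 A g); lra |].
  intros eps Heps. destruct (Hc eps Heps) as [M HM]. specialize (HM M (le_n M)).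
  rewrite (commutator_limit_decomp (u M) l g (Hu M)).
  eapply Rle_trans; [apply norm_triangle|].
  pose proof (normM A (opp (add (u M) (opp l))) g).
  pose proof (normM A g (add (u M) (opp l))).
  pose proof (norm_ge0 A g). rewrite norm_opp in *. nra.
Qed.

Definition commutant (T : A -> Prop) (b : A) : Prop :=
  forall t, T t -> mul b t = mul t b.

Lemma commutant_closed (T : A -> Prop) :
  (forall t, T t -> T (star t)) -> closed_star_subalg A (commutant T).
Proof.
  intro Hst. unfold closed_star_subalg, commutant. repeat split.
  - intros t _. rewrite mul1l, mul1r; reflexivity.
  - intros a b Ha Hb t Ht. rewrite mulDl, mulDr, (Ha t Ht), (Hb t Ht). reflexivity.
  - intros z a Ha t Ht. rewrite <- scal_mull, (Ha t Ht). apply scal_mulr.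
  - intros a b Ha Hb t Ht. rewrite <- mulA, (Hb t Ht), mulA, (Ha t Ht), mulA. reflexivity.
  - intros a Ha t Ht.
    transitivity (star (mul (star t) a)); [rewrite starM, starK; reflexivity|].
    rewrite <- (Ha (star t) (Hst t Ht)), starM, starK. reflexivity.
  - intros u l Hu Hc t Ht. apply (limit_mul_comm u); auto.
Qed.

Lemma generated_incl (G : A -> Prop) a : G a -> generated A G a.
Proof. intros H S _ HG; auto. Qed.

Lemma generated_star (G : A -> Prop) a : generated A G a -> generated A G (star a).
Proof.
  intros H S HS HG. pose proof HS as (_ & _ & _ & _ & Hs & _). apply Hs, H; auto.
Qed.

Lemma generated_sub (G G' : A -> Prop) :
  (forall a, G a -> G' a) -> forall a, generated A G a -> generated A G' a.
Proof. intros H a Ha S HS HG. apply Ha; auto. Qed.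

Lemma commutative_of_generated (G : A -> Prop) :
  commutative_set A (generated A G) -> commutative_set A G.
Proof. intros H a b Ha Hb. apply H; apply generated_incl; auto. Qed.

Lemma generated_commutative (G : A -> Prop) :
  (forall g, G g -> G (star g)) -> commutative_set A G -> commutative_set A (generated A G).
Proof.
  intros Hs Hc.
  assert (HG : forall a, generated A G a -> commutant G a).
  { intros a Ha. apply Ha; [apply commutant_closed; auto | intros g Hg t Ht; auto]. }
  intros a b Ha Hb. symmetry.
  refine (Hb _ (commutant_closed _ (generated_star G)) _ a Ha).
  intros g Hg c Hc'. symmetry. apply (HG c Hc' g Hg).
Qed.

Lemma sumA_mull n f (y : A) : mul (sumA A n f) y = sumA A n (fun i => mul (f i) y).
Proof. induction n; simpl; [apply mul0l | rewrite mulDl, IHn; reflexivity]. Qed.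

Lemma sumA_mulr n f (y : A) : mul y (sumA A n f) = sumA A n (fun i => mul y (f i)).
Proof. induction n; simpl; [apply mul0r | rewrite mulDr, IHn; reflexivity]. Qed.

Lemma eq_sumA n (f f' : nat -> A) :
  (forall i, (i < n)%nat -> f i = f' i) -> sumA A n f = sumA A n f'.
Proof.
  induction n; intro H; simpl; [reflexivity|].
  rewrite IHn, H by auto. reflexivity.
Qed.

Lemma mul2_comm_of_swaps a b c d :
  mul (mul a b) c = mul (mul c b) a -> mul (mul b a) d = mul (mul d a) b ->
  mul (mul a b) (mul c d) = mul (mul c d) (mul a b).
Proof.
  intros Habc Hbad.
  rewrite mulA, Habc, <- (mulA A c b a), <- (mulA A c (mul b a) d), Hbad.
  rewrite !mulA. reflexivity.
Qed.

End Algebra.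

Section Sphere.

Variables (N : nat) (A : CStarAlg) (x : nat -> A).

Lemma is_p_star a : is_p N A x a -> is_p N A x (star a).
Proof. intros (i & j & Hi & Hj & ->). exists j, i. rewrite starM, starK. auto. Qed.

Lemma is_q_star a : is_q N A x a -> is_q N A x (star a).
Proof. intros (i & j & Hi & Hj & ->). exists j, i. rewrite starM, starK. auto. Qed.

Lemma is_pq_star a :
  is_p N A x a \/ is_q N A x a -> is_p N A x (star a) \/ is_q N A x (star a).
Proof. intros [H | H]; [left; apply is_p_star | right; apply is_q_star]; auto. Qed.

Lemma rel_times_star : rel_times N A x ->
  forall i j k, (i < N)%nat -> (j < N)%nat -> (k < N)%nat ->
  mul (mul (star (x i)) (x j)) (star (x k)) = mul (mul (star (x k)) (x j)) (star (x i)).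
Proof.
  intros Hrel i j k Hi Hj Hk. pose proof (f_equal star (Hrel k j i Hk Hj Hi)) as H.
  rewrite !starM, !starK, !mulA in H. exact H.
Qed.

Lemma p_comm_of_rel_times : rel_times N A x -> commutative_set A (is_p N A x).
Proof.
  intros Hrel a b (i & j & Hi & Hj & ->) (k & l & Hk & Hl & ->).
  apply mul2_comm_of_swaps; [apply Hrel | apply rel_times_star]; auto.
Qed.

Lemma q_comm_of_rel_times : rel_times N A x -> commutative_set A (is_q N A x).
Proof.
  intros Hrel a b (i & j & Hi & Hj & ->) (k & l & Hk & Hl & ->).
  apply mul2_comm_of_swaps; [apply rel_times_star | apply Hrel]; auto.
Qed.

Lemma rel_times_of_pq_comm : free_complex_sphere N A x ->
  commutative_set A (is_p N A x) -> commutative_set A (is_q N A x) -> rel_times N A x.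
Proof.
  intros [Hp Hq] Pc Qc i j k Hi Hj Hk.
  assert (Hl : forall l, (l < N)%nat ->
    mul (mul (x l) (star (x l))) (mul (mul (x i) (star (x j))) (x k)) =
    mul (x k) (mul (mul (star (x l)) (x l)) (mul (star (x j)) (x i)))).
  { intros l Hl.
    assert (Eq : mul (mul (star (x l)) (x i)) (mul (star (x j)) (x k))
               = mul (mul (star (x j)) (x k)) (mul (star (x l)) (x i)))
      by (apply Qc; [exists i, l | exists k, j]; auto).
    assert (Ep : mul (mul (x l) (star (x j))) (mul (x k) (star (x l)))
               = mul (mul (x k) (star (x l))) (mul (x l) (star (x j))))
      by (apply Pc; [exists l, j | exists k, l]; auto).
    rewrite !mulA in Eq, Ep.
    transitivity (mul (x l) (mul (mul (mul (star (x l)) (x i)) (star (x j))) (x k)));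
      [rewrite !mulA; reflexivity|].
    rewrite Eq.
    transitivity (mul (mul (mul (mul (x l) (star (x j))) (x k)) (star (x l))) (x i));
      [rewrite !mulA; reflexivity|].
    rewrite Ep, !mulA. reflexivity. }
  rewrite <- (mul1l A (mul (mul (x i) (star (x j))) (x k))), <- Hp, sumA_mull.
  rewrite (eq_sumA A N _ _ Hl), <- sumA_mulr, <- sumA_mull, Hq, mul1l, !mulA.
  reflexivity.
Qed.

Lemma pq_comm_of_rel_starstar : rel_starstar N A x ->
  commutative_set A (fun a => is_p N A x a \/ is_q N A x a).
Proof.
  intros Hrel a b Ha Hb.
  assert (Hpair : forall g, is_p N A x g \/ is_q N A x g -> exists u v,
            coord_or_adj N A x u /\ coord_or_adj N A x v /\ g = mul u v).
  { intros g [(i & j & Hi & Hj & ->) | (i & j & Hi & Hj & ->)].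
    - exists (x i), (star (x j)). split; [exists i | split; [exists j|]]; auto.
    - exists (star (x j)), (x i). split; [exists j | split; [exists i|]]; auto. }
  destruct (Hpair a Ha) as (u & v & Hu & Hv & ->).
  destruct (Hpair b Hb) as (u' & v' & Hu' & Hv' & ->).
  apply mul2_comm_of_swaps; apply Hrel; auto.
Qed.

Lemma rel_starstar_of_rel_half_real : self_adjoint_coords N A x ->
  rel_half_real N A x -> rel_starstar N A x.
Proof.
  intros SA Hrel a b c Ha Hb Hc.
  assert (Hcoord : forall g, coord_or_adj N A x g -> exists i, (i < N)%nat /\ g = x i).
  { intros g (i & Hi & [-> | ->]); exists i; [|rewrite SA]; auto. }
  destruct (Hcoord a Ha) as (i & Hi & ->), (Hcoord b Hb) as (j & Hj & ->),
    (Hcoord c Hc) as (k & Hk & ->).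
  apply Hrel; auto.
Qed.

Lemma rel_half_real_of_rel_times : self_adjoint_coords N A x ->
  rel_times N A x -> rel_half_real N A x.
Proof.
  intros SA Hrel i j k Hi Hj Hk. pose proof (Hrel i j k Hi Hj Hk) as H.
  rewrite SA in H by auto. exact H.
Qed.

End Sphere.

Theorem proposition3p5 (N : nat) :
  (* (1) S_{C,x} is left and right half-classical ... *)
  ((forall (A : CStarAlg) (x : nat -> A),
      closed_subspace N A x -> rel_times N A x ->
      left_half_classical N A x /\ right_half_classical N A x) /\
   (* ... and maximal with this property *)
   (forall (A : CStarAlg) (x : nat -> A),
      closed_subspace N A x ->
      left_half_classical N A x -> right_half_classical N A x ->
      rel_times N A x)) /\
  (* (2) S_{C,**} is fully half-classical *)
  (forall (A : CStarAlg) (x : nat -> A),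
      closed_subspace N A x -> rel_starstar N A x ->
      fully_half_classical N A x) /\
  (* (3) S_{R,*} is fully half-classical, and maximal among X in S_{R,+} *)
  ((forall (A : CStarAlg) (x : nat -> A),
      closed_subspace N A x -> self_adjoint_coords N A x -> rel_half_real N A x ->
      fully_half_classical N A x) /\
   (forall (A : CStarAlg) (x : nat -> A),
      closed_subspace N A x -> self_adjoint_coords N A x ->
      fully_half_classical N A x ->
      rel_half_real N A x)).
Proof.
  assert (Hfull : forall A x, rel_starstar N A x -> fully_half_classical N A x).
  { intros A x Hrel. apply generated_commutative;
      [apply is_pq_star | apply pq_comm_of_rel_starstar; exact Hrel]. }
  assert (Hmax : forall A x, closed_subspace N A x ->
            left_half_classical N A x -> right_half_classical N A x -> rel_times N A x).
  { intros A x [Hs _] LH RH. apply rel_times_of_pq_comm; auto; apply commutative_of_generated; auto. }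
  split; [split|split; [|split]].
  - intros A x _ Hrel. split; apply generated_commutative.
    + apply is_p_star.
    + apply p_comm_of_rel_times; exact Hrel.
    + apply is_q_star.
    + apply q_comm_of_rel_times; exact Hrel.
  - exact Hmax.
  - intros A x _. apply Hfull.
  - intros A x _ SA Hrel. apply Hfull, rel_starstar_of_rel_half_real; auto.
  - intros A x Hsub SA Hf. apply rel_half_real_of_rel_times; [exact SA|].
    apply Hmax; [exact Hsub | |]; intros a b Ha Hb; apply Hf;
      (eapply generated_sub; [|eassumption]); intros; auto.
Qed.
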